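(* Let $k\ge 0$ be an integer, let $G=(V,E)$ be a finite graph together with a finite family $\mathcal{C}$ of v-cliques such that $E$ consists exactly of the pairs of distinct nodes lying in a common member of $\mathcal{C}$. Let $G'$ be the graph obtained from $G$ by merging, for each $C\in\mathcal{C}$, all nodes that belong to $C$ and to no other member of $\mathcal{C}$ into a single node, and let $\pi:V\to V(G')$ be the merging map. Then for any two distinct nodes $u,v\in V$: $u$ and $v$ belong to the same $k$-core of $G$ if and only if they belong to the same $k$-core of $G'$.
   Context: A v-clique is a set of nodes inducing a complete subgraph. The merged graph $G'$ has node set $\pi(V)$, where $\pi$ identifies exactly those nodes whose set of containing v-cliques is a single common set $\{C\}$; two distinct nodes $x,y$ of $G'$ are adjacent iff some $u\in\pi^{-1}(x)$, $w\in\pi^{-1}(y)$ are adjacent in $G$. Each node $x$ of $G'$ is said to represent the $|\pi^{-1}(x)|$ nodes of $G$ mapped to it. A finite simple undirected graph $H$ is $k$-robust if, after removing arbitrary $k$ nodes and their incident edges, the remaining graph is still connected; a clique or a single node is $k$-robust for every $k$. A maximal $k$-robust partitioning of a graph $H$ is a partition of its node set into parts such that each node is in exactly one part, each part induces a $k$-robust subgraph, and the union of any two or more parts does not induce a $k$-robust subgraph. For a graph $H$, let $u\approx_H v$ mean that $u$ and $v$ lie in the same part in every maximal $k$-robust partitioning of $H$. In $G$, a $k$-core is an equivalence class of $\approx_G$ with at least $2$ nodes, and $u,v$ belong to the same $k$-core of $G$ iff they lie in a common such class. In $G'$, nodes are counted by the records they represent: a $k$-core of $G'$ is an equivalence class $X$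 of $\approx_{G'}$ with $|\pi^{-1}(X)|\ge 2$, and $u,v\in V$ belong to the same $k$-core of $G'$ iff $\pi(u),\pi(v)$ lie in a common such class (in particular this holds when $\pi(u)=\pi(v)$). *)

From mathcomp Require Import all_boot.
Set Implicit Arguments. Unset Strict Implicit. Unset Printing Implicit Defensive.

(* Graphs: a finType T with an adjacency relation e; a graph H is given by a
   node set D : {set T}, with the subgraph induced by e. *)
Section GraphNotions.
Variables (T : finType) (e : rel T).

(* the subgraph induced on S is connected (the empty graph counts as connected) *)
Definition gconnected (S : {set T}) : Prop :=
  forall x y, x \in S -> y \in S ->
    connect [rel a b | [&& a \in S, b \in S & e a b]] x y.

Definition is_clique (S : {set T}) : Prop :=
  forall x y, x \in S -> y \in S -> x != y -> e x y.

Definition k_robust (k : nat) (S : {set T}) : Prop :=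
  is_clique S \/ (forall R : {set T}, #|R| <= k -> gconnected (S :\: R)).

Definition max_robust_partition (k : nat) (D : {set T}) (P : {set {set T}}) : Prop :=
  [/\ partition P D,
      (forall B, B \in P -> k_robust k B) &
      (forall Q : {set {set T}}, Q \subset P -> 2 <= #|Q| -> ~ k_robust k (cover Q))].

Definition robust_equiv (k : nat) (D : {set T}) (x y : T) : Prop :=
  forall P, max_robust_partition k D P -> exists2 B, B \in P & x \in B /\ y \in B.

Definition robust_class (k : nat) (D : {set T}) (X : {set T}) : Prop :=
  exists2 x, x \in D & forall y, y \in X <-> (y \in D /\ robust_equiv k D x y).

End GraphNotions.

Definition same_kcore_G (V : finType) (e : rel V) (k : nat) (u v : V) : Prop :=
  exists X : {set V}, [/\ robust_class e k setT X, 2 <= #|X|, u \in X & v \in X].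

Section Merge.
Variables (V : finType) (F : {set {set V}}).

Definition containing (u : V) : {set {set V}} := [set C in F | u \in C].

(* merging map: u is identified with w iff u = w or both are contained in
   exactly the same single member {C} of the family. A node of G' is
   represented by the set of nodes of G mapped to it. *)
Definition merge_map (u : V) : {set V} :=
  [set w | (w == u) || ((containing w == containing u) && (#|containing u| == 1))].

Definition merged_nodes : {set {set V}} := [set merge_map u | u in V].

Definition merged_edge (e : rel V) : rel {set V} :=
  fun x y => (x != y) &&
    [exists u, exists w, [&& merge_map u == x, merge_map w == y & e u w]].

Definition same_kcore_G' (e : rel V) (k : nat) (u v : V) : Prop :=
  exists X : {set {set V}},
    [/\ robust_class (merged_edge e) k merged_nodes X,
        2 <= #|[set w : V | merge_map w \in X]|,
        merge_map u \in X & merge_map v \in X].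

End Merge.

From Pilot Require Import Defs.
From mathcomp Require Import all_boot.
From mathcomp Require Import boolp.
Set Implicit Arguments. Unset Strict Implicit. Unset Printing Implicit Defensive.

(* Nodes that the merging map pi identifies into a node of size at least two
   all lie in a single member C of the family, so they are pairwise adjacent
   twins whose closed neighbourhood is the clique C; in particular they are
   simplicial.  Therefore a set B of nodes of G' is k-robust iff its preimage
   under pi is: removing simplicial nodes never disconnects the other nodes, and paths
   of G' lift to G through representatives.  Moreover every part of a maximal
   k-robust partition of G is a union of fibres of pi, since two parts meeting
   the same fibre both stay connected to the clique C after any k removals and
   could be merged.  Hence taking preimages is a bijection between the maximal
   k-robust partitions of G' and of G, which identifies the relations
   ~_{G'} and ~_G and thus the k-cores. *)

Lemma connect_map (T T' : finType) (r : rel T) (r' : rel T') (f : T -> T') :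
  (forall x y, r x y -> connect r' (f x) (f y)) ->
  forall x y, connect r x y -> connect r' (f x) (f y).
Proof.
move=> rr' x _ /connectP[p + ->]; elim: p x => [|y p IHp] x /=; first by rewrite connect0.
by case/andP=> /rr' rxy /IHp; apply: connect_trans.
Qed.

Lemma cover_set2 (T : finType) (A B : {set T}) : A != B -> cover [set A; B] = A :|: B.
Proof. by move=> AB; rewrite /cover big_setU1 ?inE // big_set1. Qed.

Section InducedConnectivity.
Variables (T : finType) (e : rel T).

Definition induced (S : {set T}) : rel T := [rel a b | [&& a \in S, b \in S & e a b]].

Lemma connect_induced_subset (S S' : {set T}) :
  S \subset S' -> subrel (connect (induced S)) (connect (induced S')).
Proof.
move=> sSS'; apply: connect_sub => a b /and3P[aS bS eab].
by apply: connect1; rewrite /induced /= (subsetP sSS' a aS) (subsetP sSS' b bS).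
Qed.

Definition simplicial (z : T) : Prop := forall a b, e z a -> e z b -> a != b -> e a b.

Hypothesis e_sym : symmetric e.

Lemma induced_connect_sym (S : {set T}) : connect_sym (induced S).
Proof. by apply: sym_connect_sym => a b; rewrite /induced /= e_sym andbCA. Qed.

(* A path entering a simplicial z can jump from the node before z to the node
   after it, so the shortest paths avoid Z. *)
Lemma connect_avoid_simplicial (S Z : {set T}) x y :
  {in Z, forall z, simplicial z} -> x \notin Z -> y \notin Z ->
  connect (induced S) x y -> connect (induced (S :\: Z)) x y.
Proof.
move=> simplZ xZ yZ /connectP[p pth yE]; subst y.
have [n] := ubnP (size p); elim: n p x xZ pth yZ => // n IHn [|a p] x xZ /=.
  by rewrite connect0.
case/andP=> /and3P[xS aS exa] pth lastZ szp.
have [aZ | aZ] := boolP (a \in Z); last first.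
  apply: connect_trans (IHn p a aZ pth lastZ szp).
  by apply: connect1; rewrite /induced /= !inE xZ aZ xS aS.
case: p pth lastZ szp => [|b p] /=; first by rewrite aZ.
case/andP=> /and3P[_ bS eab] pth lastZ; rewrite ltnS => szp.
have [bx | bx] := eqVneq b x.
  by subst b; apply: IHn p x xZ pth lastZ (ltnW szp).
have exb : e x b by apply: (simplZ a) => //; rewrite 1?e_sym // eq_sym.
have pth' : path (induced S) x (b :: p) by rewrite /= pth andbT /induced /= xS bS.
exact: IHn (b :: p) x xZ pth' lastZ szp.
Qed.

Hypothesis e_irr : irreflexive e.

(* If A is not inside K, it is not a clique, and removing the neighbours of t
   would separate t from A :\: K; so t has more than k neighbours in A, and one
   of them survives the removal of R. *)
Lemma robust_reaches_clique k (A S R K : {set T}) t x :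
  k_robust e k A -> A \subset S -> t \in A -> t \in K ->
  [set z | e t z] \subset K -> #|R| <= k -> x \in A :\: R ->
  exists2 y, y \in (S :\: R) :&: K & connect (induced (S :\: R)) x y.
Proof.
move=> robA sAS tA tK NtK Rk xAR.
have sARS : A :\: R \subset S :\: R by apply: setSD.
have NtK' z : e t z -> z \in K by move=> etz; apply: (subsetP NtK); rewrite inE.
have [AK | /subsetPn[z zA zK]] := boolP (A \subset K).
  by exists x; rewrite // inE (subsetP sARS) // (subsetP AK) //; case/setDP: xAR.
have tz : t != z by apply: contraNneq zK => <-.
have {}robA (R' : {set T}) : #|R'| <= k -> gconnected e (A :\: R').
  case: robA => [cliqueA _ | /(_ R') //].
  by case/negP: zK; apply/NtK'/cliqueA.
have /subsetPn[y /setIP[yA]] : ~~ (A :&: [set z | e t z] \subset R).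
  apply/negP => NR.
  have tAN : t \in A :\: (A :&: [set z | e t z]) by rewrite !inE tA e_irr.
  have zAN : z \in A :\: (A :&: [set z | e t z]).
    by rewrite !inE zA andbT; apply: contra zK => /NtK'.
  case/connectP: (robA _ (leq_trans (subset_leq_card NR) Rk) t z tAN zAN).
  case=> [_ /= zt | y p /= /andP[/and3P[_ yAN ety] _] _].
    by rewrite -zt eqxx in tz.
  by move: yAN; rewrite !inE ety /= andbT => /andP[/negP].
rewrite inE => ety yR.
have yAR : y \in A :\: R by rewrite inE yR yA.
exists y; first by rewrite inE (subsetP sARS) // NtK'.
exact: connect_induced_subset sARS _ _ (robA R Rk x y xAR yAR).
Qed.

Lemma robust_union_clique k (A B K : {set T}) a b :
  is_clique e K -> k_robust e k A -> k_robust e k B ->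
  a \in A -> a \in K -> [set z | e a z] \subset K ->
  b \in B -> b \in K -> [set z | e b z] \subset K -> k_robust e k (A :|: B).
Proof.
move=> cliqueK robA robB aA aK NaK bB bK NbK; right=> R Rk.
set S := (A :|: B) :\: R.
have reach x : x \in S -> exists2 y, y \in S :&: K & connect (induced S) x y.
  case/setDP=> /setUP[xA | xB] xR.
    by apply: (robust_reaches_clique robA (subsetUl A B) aA aK NaK Rk); rewrite inE xR.
  by apply: (robust_reaches_clique robB (subsetUr A B) bB bK NbK Rk); rewrite inE xR.
move=> x y /reach[x' /setIP[x'S x'K] xx'] /reach[y' /setIP[y'S y'K] yy'].
rewrite /= (induced_connect_sym S) in yy'.
apply: connect_trans xx' (connect_trans _ yy').
have [<- | x'y'] := eqVneq x' y'; first exact: connect0.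
by apply: connect1; rewrite /induced /= x'S y'S cliqueK.
Qed.

End InducedConnectivity.

Section RobustClasses.
Variables (T : finType) (e : rel T) (k : nat) (D : {set T}).

Lemma robust_equiv_refl x : x \in D -> robust_equiv e k D x x.
Proof.
move=> xD P [/and3P[/eqP coverP _ _] _ _].
have /bigcupP[B BP xB] : x \in cover P by rewrite coverP.
by exists B.
Qed.

Lemma robust_equiv_trans_l x y z :
  robust_equiv e k D x y -> robust_equiv e k D x z -> robust_equiv e k D y z.
Proof.
move=> xy xz P maxP; have [B BP [xB yB]] := xy P maxP.
have [B' B'P [xB' zB']] := xz P maxP.
case: maxP => /and3P[_ /trivIsetP trivP _] _ _.
have [BB' | BB'] := eqVneq B B'; first by subst B'; exists B.
by case/negP: (disjointFr (trivP B B' BP B'P BB') xB); rewrite xB'.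
Qed.

Lemma robust_class_equiv (X : {set T}) x y :
  robust_class e k D X -> x \in X -> y \in X -> robust_equiv e k D x y.
Proof.
case=> x0 _ classX /classX[_ x0x] /classX[_ x0y].
exact: robust_equiv_trans_l x0x x0y.
Qed.

Definition robust_class_of x : {set T} := [set y in D | `[< robust_equiv e k D x y >]].

Lemma robust_class_ofP x y :
  reflect (y \in D /\ robust_equiv e k D x y) (y \in robust_class_of x).
Proof. by rewrite inE; apply: (iffP andP) => -[-> /asboolP]. Qed.

Lemma robust_class_of_class x : x \in D -> robust_class e k D (robust_class_of x).
Proof. by move=> xD; exists x => // y; split=> /robust_class_ofP. Qed.

Lemma robust_class_of_pair x y : x \in D -> y \in D -> robust_equiv e k D x y ->
  x \in robust_class_of x /\ y \in robust_class_of x.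
Proof.
by move=> xD yD xy; split; apply/robust_class_ofP; split=> //; apply: robust_equiv_refl.
Qed.

End RobustClasses.

Section PreimagePartitions.
Variables (V W : finType) (h : V -> W).
Local Notation range := [set h x | x in V].

Definition preimsets (Q : {set {set W}}) : {set {set V}} :=
  [set h @^-1: B | B : {set W} in Q].

Lemma preimsetK (B : {set W}) : B \subset range -> h @: (h @^-1: B) = B.
Proof.
move=> sBr; apply/setP=> y; apply/imsetP/idP => [[x + ->] | yB]; first by rewrite inE.
by case/imsetP: (subsetP sBr y yB) => x _ yE; exists x; rewrite // inE -yE.
Qed.

Lemma preimset_eq (B B' : {set W}) : B \subset range -> B' \subset range ->
  (h @^-1: B == h @^-1: B') = (B == B').
Proof.
move=> sBr sB'r; apply/eqP/eqP => [eqBB' | -> //].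
by rewrite -(preimsetK sBr) eqBB' preimsetK.
Qed.

Lemma preimset_disjoint (B B' : {set W}) : B \subset range -> B' \subset range ->
  [disjoint h @^-1: B & h @^-1: B'] = [disjoint B & B'].
Proof.
move=> sBr sB'r; rewrite -!setI_eq0 -preimsetI -(preimset0 h).
by rewrite preimset_eq ?sub0set // (subset_trans (subsetIl B B')).
Qed.

Lemma cover_preimsets Q : cover (preimsets Q) = h @^-1: cover Q.
Proof.
apply/setP=> x; rewrite inE; apply/bigcupP/bigcupP => [[A /imsetP[B BQ ->]] | [B BQ hxB]].
  by rewrite inE => hxB; exists B.
by exists (h @^-1: B); rewrite ?inE ?imset_f.
Qed.

Section OverRange.
Variable Q : {set {set W}}.
Hypothesis sQr : {in Q, forall B : {set W}, B \subset range}.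

Lemma mem_preimsets (B : {set W}) :
  B \subset range -> (h @^-1: B \in preimsets Q) = (B \in Q).
Proof.
move=> sBr; apply/idP/idP => [/imsetP[B' B'Q /eqP] | BQ]; last exact: imset_f.
by rewrite (preimset_eq sBr (sQr B'Q)) => /eqP->.
Qed.

Lemma card_preimsets : #|preimsets Q| = #|Q|.
Proof.
apply: card_in_imset => B B' BQ B'Q /eqP.
by rewrite (preimset_eq (sQr BQ) (sQr B'Q)) => /eqP.
Qed.

Lemma preimsets_subset (R : {set {set V}}) :
  R \subset preimsets Q -> R = preimsets [set B in Q | h @^-1: B \in R].
Proof.
move=> sRQ; apply/setP=> A; apply/idP/imsetP => [AR | [B /setIdP[_ BR] ->] //].
case/imsetP: (subsetP sRQ A AR) => B BQ AE.
by exists B; rewrite // inE BQ -AE.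
Qed.

Lemma partition_preimsets : partition (preimsets Q) setT = partition Q range.
Proof.
have sQcr : cover Q \subset range by apply/bigcupsP.
have rangeT : h @^-1: range = setT by apply/setP => x; rewrite !inE imset_f.
rewrite /partition cover_preimsets -rangeT preimset_eq ?subxx //.
rewrite -(preimset0 h) mem_preimsets ?sub0set //.
congr (_ && (_ && _)); apply/trivIsetP/trivIsetP => trivQ.
  move=> B B' BQ B'Q BB'; rewrite -preimset_disjoint ?sQr //.
  by apply: trivQ; rewrite ?mem_preimsets ?preimset_eq ?sQr.
move=> _ _ /imsetP[B BQ ->] /imsetP[B' B'Q ->]; rewrite preimset_eq ?sQr // => BB'.
by rewrite preimset_disjoint ?sQr // trivQ.
Qed.

End OverRange.

Variables (e : rel V) (e' : rel W) (k : nat).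
Hypothesis robust_preim :
  forall B : {set W}, B \subset range -> k_robust e k (h @^-1: B) <-> k_robust e' k B.

Lemma max_robust_partition_preimsets (Q : {set {set W}}) :
  {in Q, forall B : {set W}, B \subset range} ->
  max_robust_partition e k setT (preimsets Q) <-> max_robust_partition e' k range Q.
Proof.
move=> sQr; have sQ'r (Q' : {set {set W}}) :
    Q' \subset Q -> {in Q', forall B : {set W}, B \subset range}.
  by move=> sQ'Q B /(subsetP sQ'Q)/sQr.
have sCr (Q' : {set {set W}}) : Q' \subset Q -> cover Q' \subset range.
  by move=> /sQ'r sQ'r'; apply/bigcupsP.
split=> [[partP robP maxP] | [partQ robQ maxQ]]; split.
- by rewrite -partition_preimsets.
- by move=> B BQ; apply/robust_preim; [exact: sQr | apply/robP/imset_f].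
- move=> Q' sQ'Q Q'2 robQ'; apply: (maxP (preimsets Q')); first exact: imsetS.
    by rewrite (card_preimsets (sQ'r _ sQ'Q)).
  by rewrite cover_preimsets; apply/robust_preim => //; exact: sCr.
- by rewrite partition_preimsets.
- by move=> _ /imsetP[B BQ ->]; apply/robust_preim; [exact: sQr | exact: robQ].
move=> R sRQ; rewrite [R](preimsets_subset sRQ) card_preimsets ?cover_preimsets.
- move=> R2 robR; apply: (maxQ _ _ R2); first by apply/subsetP=> B /setIdP[].
  by apply/robust_preim => //; apply: sCr; apply/subsetP => B /setIdP[].
- by apply: sQ'r; apply/subsetP => B /setIdP[].
Qed.

Hypothesis max_partition_saturated : forall P, max_robust_partition e k setT P ->
  forall A a w, A \in P -> a \in A -> h w = h a -> w \in A.

Lemma robust_equiv_preim u v :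
  robust_equiv e k setT u v <-> robust_equiv e' k range (h u) (h v).
Proof.
split=> [equv Q maxQ | equv P maxP].
  have sQr : {in Q, forall B : {set W}, B \subset range}.
    by case: maxQ => /and3P[/eqP <- _ _] _ _ B; apply: bigcup_sup.
  rewrite -(max_robust_partition_preimsets sQr) in maxQ.
  have [_ /imsetP[B BQ ->]] := equv _ maxQ.
  by rewrite !inE; exists B.
set Q := [set h @: A | A : {set V} in P].
have satP A : A \in P -> h @^-1: (h @: A) = A.
  move=> AP; apply/setP=> w; rewrite inE; apply/imsetP/idP => [[a aA hwa] | wA].
    exact: max_partition_saturated maxP A a w AP aA hwa.
  by exists w.
have PQ : P = preimsets Q.
  by rewrite /preimsets -imset_comp (eq_in_imset satP) imset_id.
have sQr : {in Q, forall B : {set W}, B \subset range}.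
  by move=> _ /imsetP[A _ ->]; apply/imsetS/subsetP.
rewrite PQ (max_robust_partition_preimsets sQr) in maxP.
have [_ /imsetP[A AP ->] [uA vA]] := equv _ maxP.
by exists A => //; rewrite -(satP A AP) !inE.
Qed.

End PreimagePartitions.

Section Merge.
Variables (V : finType) (F : {set {set V}}).
(* Qualified: [merge_map] alone is a lemma of path.v. *)
Local Notation pi := (Defs.merge_map F).

Lemma merge_map_id u : u \in pi u.
Proof. by rewrite inE eqxx. Qed.

Lemma merge_mapP u w : reflect (pi w = pi u) (w \in pi u).
Proof.
apply: (iffP idP) => [| <-]; last exact: merge_map_id.
rewrite inE => /orP[/eqP -> // | /andP[/eqP cwu c1]].
apply/setP=> z; rewrite !inE cwu c1 !andbT.
have [-> | _] := eqVneq z w; first by rewrite cwu eqxx !orbT.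
by have [-> | _] := eqVneq z u; rewrite ?eqxx ?orbT.
Qed.

Lemma merge_map_containing u w : pi w = pi u -> w != u ->
  containing F w = containing F u /\ #|containing F u| = 1.
Proof.
move/merge_mapP; rewrite inE => /orP[/eqP-> | /andP[/eqP-> /eqP->] //].
by rewrite eqxx.
Qed.

Variable e : rel V.
Hypothesis e_def : forall x y, e x y = (x != y) && [exists C in F, (x \in C) && (y \in C)].

Lemma merge_sym : symmetric e.
Proof.
move=> x y; rewrite !e_def eq_sym; congr (_ && _).
by apply: eq_existsb => C; rewrite [(x \in C) && _]andbC.
Qed.

Lemma merge_irr : irreflexive e.
Proof. by move=> x; rewrite e_def eqxx. Qed.

Lemma clique_of_member C : C \in F -> is_clique e C.
Proof.
by move=> CF x y xC yC xy; rewrite e_def xy; apply/exists_inP; exists C; rewrite ?xC.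
Qed.

Lemma fiber_nbhd u w : pi w = pi u -> w != u -> exists2 C, C \in F &
  forall t, pi t = pi u -> t \in C /\ forall z, e t z = (t != z) && (z \in C).
Proof.
move=> wu /(merge_map_containing wu)[_ /eqP/cards1P[C cuC]].
have CF : C \in F by have := set11 C; rewrite -cuC inE => /andP[].
exists C => // t tu.
have ctC : containing F t = [set C].
  have [-> // | tnu] := eqVneq t u.
  by have [-> _] := merge_map_containing tu tnu.
have inC C' : (C' \in F) && (t \in C') = (C' == C) by rewrite -in_set1 -ctC inE.
have tC : t \in C by have := inC C; rewrite eqxx => /andP[].
split=> // z; rewrite e_def; congr (_ && _).
apply/exists_inP/idP => [[C' C'F /andP[tC' zC']] | zC]; last by exists C; rewrite ?tC.
by have /eqP <- : C' == C by rewrite -inC C'F.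
Qed.

Lemma merge_edge a b : pi a = pi b -> a != b -> e a b.
Proof.
move=> ab anb; have [C _ nbhd] := fiber_nbhd ab anb.
by have [_ ->] := nbhd a ab; have [bC _] := nbhd b erefl; rewrite anb.
Qed.

Lemma merge_twins a b z : pi a = pi b -> pi z != pi b -> e a z = e b z.
Proof.
move=> ab zb; have [-> // | anb] := eqVneq a b.
have [C _ nbhd] := fiber_nbhd ab anb.
have [_ ->] := nbhd a ab; have [_ ->] := nbhd b erefl.
have az : a != z by apply: contraNneq zb => <-; rewrite ab.
have bz : b != z by apply: contraNneq zb => <-.
by rewrite az bz.
Qed.

Lemma merge_simplicial u w : pi w = pi u -> w != u -> simplicial e u.
Proof.
move=> wu wnu a b ua ub ab; have [C CF nbhd] := fiber_nbhd wu wnu.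
have [_ nbu] := nbhd u erefl; move: ua ub; rewrite !nbu => /andP[_ aC] /andP[_ bC].
exact: clique_of_member CF a b aC bC ab.
Qed.

Lemma merged_edge_merge_map a b :
  merged_edge F e (pi a) (pi b) = (pi a != pi b) && e a b.
Proof.
rewrite /merged_edge; case: eqVneq => //= ab.
apply/existsP/idP => [[a' /existsP[b' /and3P[/eqP a'a /eqP b'b ea'b']]] | eab].
  have ba : pi b != pi a by rewrite eq_sym.
  by rewrite -(merge_twins a'a) // merge_sym -(merge_twins b'b) ?a'a // merge_sym.
by exists a; apply/existsP; exists b; rewrite !eqxx eab.
Qed.

Lemma clique_preim (B : {set {set V}}) : B \subset merged_nodes F ->
  is_clique e (pi @^-1: B) <-> is_clique (merged_edge F e) B.
Proof.
move=> BN; split=> cliqueB.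
  move=> x y xB yB xy.
  case/imsetP: (subsetP BN x xB) => a _ xE; case/imsetP: (subsetP BN y yB) => b _ yE.
  subst x y; rewrite merged_edge_merge_map xy cliqueB ?inE //.
  by apply: contraNneq xy => ->.
move=> a b; rewrite !inE => aB bB ab.
have [eqab | neab] := eqVneq (pi a) (pi b); first exact: merge_edge.
by move: (cliqueB _ _ aB bB neab); rewrite merged_edge_merge_map => /andP[].
Qed.

(* Merged nodes of size one are removed in G; the larger ones consist of
   simplicial nodes of G, which connectivity does not need. *)
Lemma connected_preim_down k (B : {set {set V}}) : B \subset merged_nodes F ->
  (forall R : {set V}, #|R| <= k -> gconnected e (pi @^-1: B :\: R)) ->
  forall R' : {set {set V}}, #|R'| <= k -> gconnected (merged_edge F e) (B :\: R').
Proof.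
move=> BN conB R' R'k x y /setDP[xB xR'] /setDP[yB yR'].
case/imsetP: (subsetP BN x xB) => a _ xE; case/imsetP: (subsetP BN y yB) => b _ yE.
subst x y; set R := [set u | (pi u \in R') && (#|pi u| <= 1)].
set Z := [set u | (pi u \in R') && (1 < #|pi u|)].
have Rk : #|R| <= k.
  rewrite -(@card_in_imset _ _ pi); last first.
    move=> u w; rewrite inE => /andP[_ /card_le1_eqP pu1] _ uw.
    by apply/esym/pu1; [exact: merge_map_id | apply/merge_mapP].
  apply: leq_trans R'k; apply/subset_leq_card/subsetP => _ /imsetP[u + ->].
  by rewrite inE => /andP[].
have simplZ : {in Z, forall z, simplicial e z}.
  move=> z; rewrite inE => /andP[_ /card_gt1P[w1 [w2 [w1z w2z w12]]]].
  have [w /merge_mapP wz wnz] : exists2 w, w \in pi z & w != z.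
    have [w1E | ] := eqVneq w1 z; last by exists w1.
    by exists w2; rewrite // -w1E eq_sym.
  exact: merge_simplicial wz wnz.
have preimE : pi @^-1: B :\: R :\: Z = pi @^-1: (B :\: R').
  apply/setP => t; rewrite !inE ltnNge.
  by case: (pi t \in R'); case: (#|pi t| <= 1); rewrite ?andbF.
have := conB R Rk a b; rewrite !inE (negbTE xR') (negbTE yR') xB yB => /(_ isT isT).
have aZ : a \notin Z by rewrite inE (negbTE xR').
have bZ : b \notin Z by rewrite inE (negbTE yR').
move/(connect_avoid_simplicial merge_sym simplZ aZ bZ); rewrite preimE.
apply: connect_map => p q /and3P[pB qB epq].
have [-> | pq] := eqVneq (pi p) (pi q); first exact: connect0.
by apply: connect1; move: pB qB; rewrite /= merged_edge_merge_map pq epq !inE => -> ->.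
Qed.

(* A path of G' avoiding the merged nodes contained in R lifts to G by
   choosing in every node a representative outside R. *)
Lemma connected_preim_up k (B : {set {set V}}) : B \subset merged_nodes F ->
  (forall R' : {set {set V}}, #|R'| <= k -> gconnected (merged_edge F e) (B :\: R')) ->
  forall R : {set V}, #|R| <= k -> gconnected e (pi @^-1: B :\: R).
Proof.
move=> BN conB R Rk a b aS bS; set S := pi @^-1: B :\: R in aS bS *.
set R' := [set x in pi @: R | x \subset R].
have R'k : #|R'| <= k.
  apply: leq_trans (leq_trans (leq_imset_card pi R) Rk).
  by apply/subset_leq_card/subsetP => x /setIdP[].
have piS c : c \in S -> pi c \in B :\: R'.
  rewrite !inE => /andP[cR ->]; rewrite andbT negb_and; apply/orP; right.
  by apply: contra cR => /subsetP; apply; apply: merge_map_id.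
pose g x := odflt a [pick c in x :\: R].
have gP x : x \in B :\: R' -> g x \in S /\ pi (g x) = x.
  case/setDP=> xB xR'; case/imsetP: (subsetP BN x xB) => c _ xE.
  rewrite /g; case: pickP => [d /setDP[dx dR] | none] /=.
    have dE : pi d = x by rewrite xE; apply/merge_mapP; rewrite -xE.
    by rewrite !inE dR dE xB.
  have sxR : x \subset R.
    apply/subsetP => d dx; apply/negPn/negP => dR.
    by have := none d; rewrite inE dR dx.
  by case/negP: xR'; rewrite inE sxR xE imset_f // (subsetP sxR) // xE merge_map_id.
have fiberC c d : c \in S -> d \in S -> pi c = pi d -> connect (induced e S) c d.
  move=> cS dS cd; have [<- | ncd] := eqVneq c d; first exact: connect0.
  by apply: connect1; rewrite /induced /= cS dS merge_edge.
have [gaS gaE] := gP _ (piS a aS); have [gbS gbE] := gP _ (piS b bS).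
apply: connect_trans (fiberC _ _ aS gaS (esym gaE)) _.
apply: connect_trans (fiberC _ _ gbS bS gbE).
move: (conB R' R'k _ _ (piS a aS) (piS b bS)); apply: connect_map.
move=> x y /and3P[/gP[gxS gxE] /gP[gyS gyE]]; rewrite -{1}gxE -{1}gyE.
rewrite merged_edge_merge_map => /andP[_ exy].
by apply: connect1; rewrite /induced /= gxS gyS.
Qed.

Lemma k_robust_merge_preim k (B : {set {set V}}) : B \subset merged_nodes F ->
  k_robust e k (pi @^-1: B) <-> k_robust (merged_edge F e) k B.
Proof.
move=> BN; split=> [[/(clique_preim BN) | /(connected_preim_down BN)] |
                    [/(clique_preim BN) | /(connected_preim_up BN)]];
  by [left | right].
Qed.

(* Two parts of a maximal partition meeting a common merged node would both
   reach the member C of the family around it, a clique, so their union would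
   still be k-robust. *)
Lemma max_robust_partition_saturated k (P : {set {set V}}) :
  max_robust_partition e k setT P ->
  forall A a w, A \in P -> a \in A -> pi w = pi a -> w \in A.
Proof.
move=> [/and3P[/eqP coverP _ _] robP maxP] A a w AP aA wa; apply/negPn/negP => wA.
have wna : w != a by apply: contraNneq wA => ->.
have /bigcupP[B BP wB] : w \in cover P by rewrite coverP inE.
have AB : A != B by apply: contraNneq wA => ->.
have [C CF nbhd] := fiber_nbhd wa wna.
have nbhdC t : pi t = pi a -> t \in C /\ [set z | e t z] \subset C.
  by case/nbhd=> tC etC; split=> //; apply/subsetP => z; rewrite inE etC => /andP[].
have [aC NaC] := nbhdC a erefl; have [wC NwC] := nbhdC w wa.
apply: (maxP [set A; B]); first by apply/subsetP => X /set2P[] ->.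
  by rewrite cards2 AB.
rewrite cover_set2 //; apply: robust_union_clique aA aC NaC wB wC NwC.
- exact: merge_sym.
- exact: merge_irr.
- exact: clique_of_member CF.
- exact: robP.
- exact: robP.
Qed.

End Merge.

Lemma same_kcore_G_iff (V : finType) (e : rel V) k (u v : V) : u != v ->
  same_kcore_G e k u v <-> robust_equiv e k setT u v.
Proof.
move=> uv; split=> [[X [classX _ uX vX]] | equv].
  exact: robust_class_equiv classX uX vX.
have [uX vX] := robust_class_of_pair (in_setT u) (in_setT v) equv.
exists (robust_class_of e k setT u); split=> //; first exact: robust_class_of_class.
by apply/card_gt1P; exists u, v.
Qed.

Lemma same_kcore_G'_iff (V : finType) (F : {set {set V}}) (e : rel V) k (u v : V) : u != v ->
  same_kcore_G' F e k u v <->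
  robust_equiv (merged_edge F e) k (merged_nodes F) (Defs.merge_map F u) (Defs.merge_map F v).
Proof.
move=> uv; split=> [[X [classX _ uX vX]] | equv].
  exact: robust_class_equiv classX uX vX.
have uN : Defs.merge_map F u \in merged_nodes F by apply: imset_f.
have vN : Defs.merge_map F v \in merged_nodes F by apply: imset_f.
have [uX vX] := robust_class_of_pair uN vN equv.
set X := robust_class_of _ _ _ _ in uX vX.
exists X; split=> //; first exact: robust_class_of_class.
by apply/card_gt1P; exists u, v; split=> //; rewrite in_set.
Qed.

Theorem theorem1 (V : finType) (e : rel V) (F : {set {set V}}) (k : nat) :
  (forall x y, e x y = (x != y) && [exists C in F, (x \in C) && (y \in C)]) ->
  forall u v : V, u != v ->
    (same_kcore_G e k u v <-> same_kcore_G' F e k u v).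
Proof.
move=> e_def u v uv.
apply: iff_trans (same_kcore_G_iff e k uv) _.
apply: iff_trans _ (iff_sym (same_kcore_G'_iff F e k uv)).
apply: (@robust_equiv_preim _ _ (Defs.merge_map F)).
- exact: k_robust_merge_preim.
- exact: max_robust_partition_saturated.
Qed.
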